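(* Let $D\subset\mathbb R^d$ be a domain, $\mathcal M$ a countable index set with a level function $|\cdot|\colon\mathcal M\to\mathbb N_0$, and $\theta_\mu\in L_\infty(D)$, $\mu\in\mathcal M$, such that for all $\mu\in\mathcal M$: (a) $\operatorname{diam}\operatorname{supp}\theta_\mu\eqsim 2^{-|\mu|}$; (b) $\#\{\mu\in\mathcal M:|\mu|=\ell,\ \operatorname{supp}\theta_\mu\cap B(x,r)\neq\emptyset\}\lesssim\max\{1,2^{d\ell}r^d\}$ for all $x\in\mathbb R^d$, $r>0$, $\ell\in\mathbb N_0$; (c) for some $\alpha>0$, $\|\theta_\mu\|_{L_\infty(D)}\lesssim 2^{-\alpha|\mu|}$. Then there exist $Q\in\mathbb N$, depending on $d$ and the implicit constants in (a)–(c), and a level assignment $|\cdot|_Q\colon\mathcal M\to\mathbb N_0$ such that: (i) if $|\mu|_Q=|\mu'|_Q$ and $\mu\neq\mu'$, then $\theta_\mu\theta_{\mu'}=0$ in $L_\infty(D)$; (ii) for every $\mu$ and all $\ell<|\mu|_Q$ there is at most one $\mu'$ with $|\mu'|_Q=\ell$ and $\theta_\mu\theta_{\mu'}\neq0$ in $L_\infty(D)$; (iii) $\#\{\mu:|\mu|_Q=\ell\}\lesssim 2^{\frac dQ\ell}$ for all $\ell$; (iv) $\sum_{|\mu|_Q=\ell}|\theta_\mu|\lesssim 2^{-\frac\alpha Q\ell}$ a.e. in $D$ for all $\ell$, with constants independent of $\ell$.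
   Context: $B(x,r)$ denotes the ball of radius $r$ centered at $x$; $\lesssim$ and $\eqsim$ denote inequalities/equivalences up to constants independent of $\mu,\ell,x,r$. *)

From HB Require Import structures.
From mathcomp Require Import all_boot all_order all_algebra.
From mathcomp Require Import all_classical all_reals all_analysis.
Set Implicit Arguments. Unset Strict Implicit. Unset Printing Implicit Defensive.
Import Order.TTheory GRing.Theory Num.Theory.
Import numFieldNormedType.Exports.
Local Open Scope classical_set_scope.
Local Open Scope ring_scope.

Section Defs.
Variables (R : realType) (d : nat).
Notation V := 'rV[R]_d.

Definition eucl (x : V) : R := Num.sqrt (\sum_(i < d) (x ord0 i) ^+ 2).

Definition eball (x : V) (r : R) : set V := [set y | eucl (y - x) < r].

(* diameter (in the extended reals; -oo for the empty set, +oo if unbounded) *)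
Definition diam (A : set V) : \bar R :=
  ereal_sup [set (eucl (x - y))%:E | x in A & y in A].

Definition box (a b : V) : set V :=
  [set x | forall i : 'I_d, a ord0 i <= x ord0 i <= b ord0 i].
Definition vol (a b : V) : R := \prod_(i < d) Num.max 0 (b ord0 i - a ord0 i).

Definition lebesgue_outer (A : set V) : \bar R :=
  ereal_inf [set s : \bar R | exists a b : nat -> V,
     A `<=` \bigcup_k box (a k) (b k) /\
     s = (\sum_(0 <= k <oo) (vol (a k) (b k))%:E)%E].

Definition leb_measurable (A : set V) : Prop :=
  forall E : set V, lebesgue_outer E = (lebesgue_outer (E `&` A) + lebesgue_outer (E `\` A))%E.

Definition leb_null (N : set V) : Prop := lebesgue_outer N = 0%E.

Definition ae_in (D : set V) (P : V -> Prop) : Prop :=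
  leb_null [set x | D x /\ ~ P x].

Definition leb_measurable_fun (D : set V) (f : V -> R) : Prop :=
  forall a : R, leb_measurable [set x | D x /\ f x < a].

Definition in_Linfty (D : set V) (f : V -> R) : Prop :=
  leb_measurable_fun D f /\ exists C : R, ae_in D (fun x => `|f x| <= C).

(* support of (the given representative of) f on D: closure of {x in D | f x <> 0} *)
Definition supp (D : set V) (f : V -> R) : set V :=
  closure [set x | D x /\ f x != 0].

Definition domain (D : set V) : Prop := D !=set0 /\ open D /\ connected D.

Definition bounded_dom (D : set V) : Prop := exists M : R, forall x, D x -> eucl x <= M.
End Defs.

Definition at_most {R : realType} {M : eqType} (A : set M) (c : R) : Prop :=
  exists s : seq M, (size s)%:R <= c /\ A `<=` [set x | x \in s].

From HB Require Import structures.
From mathcomp Require Import all_boot all_order all_algebra.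
From mathcomp Require Import all_classical all_reals all_analysis.
From mathcomp Require Import lra.
Set Implicit Arguments.
Unset Strict Implicit.
Unset Printing Implicit Defensive.

(* Colour the indices greedily, in the enumeration order of the countable type [M], so
   that two distinct indices of the same level whose supports come within distance
   [ca2 2^-|mu|] of each other get different colours.  By (a) all such neighbours of [mu]
   have supports meeting a ball of radius [3 d ca2 2^-|mu|] around a point of
   [supp theta_mu], so by (b) there are at most [K = cb max(1, (3 d ca2)^d)] of them and
   [Q = floor K + 1] colours suffice.  Put [|mu|_Q = Q |mu| + colour mu].  Indices with
   equal refined level have equal level and colour, so their supports are more than
   [ca2 2^-|mu|] apart: this gives (i), and also (ii), since an index of refined level
   below [|mu|_Q] has level at most [|mu|], so two of them at distance larger than the
   diameter of [supp theta_mu] cannot both meet it.  Since [|mu| = |mu|_Q %/ Q], (iii)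
   is (b) for a ball containing the bounded domain, and (iv) follows from (c) because by
   (i) each sum has at most one nonzero term. *)

Import Order.TTheory GRing.Theory Num.Theory.
Local Open Scope classical_set_scope.
Local Open Scope ring_scope.

Section NullSets.
Variables (R : realType) (d : nat).
Notation V := 'rV[R]_d.

Lemma vol_ge0 (a b : V) : 0 <= vol a b.
Proof. by apply: prodr_ge0 => i _; rewrite le_max lexx. Qed.

Lemma lebesgue_outer_ge0 (A : set V) : (0 <= lebesgue_outer A)%E.
Proof.
apply: le_ereal_inf_tmp => _ [a [b [_ ->]]].
by apply: nneseries_ge0 => n _ _; rewrite lee_fin vol_ge0.
Qed.

Lemma le_lebesgue_outer (A B : set V) :
  A `<=` B -> (lebesgue_outer A <= lebesgue_outer B)%E.
Proof.
move=> AB; apply: ereal_inf_le_tmp => _ [a [b [Bcov ->]]].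
by exists a, b; split => //; apply: subset_trans Bcov.
Qed.

Lemma leb_nullE (A : set V) :
  leb_null A <-> (forall e : R, 0 < e -> (lebesgue_outer A <= e%:E)%E).
Proof.
split=> [-> e e_gt0|Ale]; first by rewrite lee_fin ltW.
apply/le_anti; rewrite lebesgue_outer_ge0 andbT.
by apply/lee_addgt0Pr => e e_gt0; rewrite add0e; apply: Ale.
Qed.

Lemma leb_null_sub (A B : set V) : A `<=` B -> leb_null B -> leb_null A.
Proof.
move=> AB /leb_nullE Ble; apply/leb_nullE => e e_gt0.
exact: le_trans (le_lebesgue_outer AB) (Ble e e_gt0).
Qed.

(* For [d = 0] every box has volume [1], so not even [set0] is null. *)
Lemma leb_null0 : (0 < d)%N -> leb_null (set0 : set V).
Proof.
move=> d_gt0; apply/le_anti; rewrite lebesgue_outer_ge0 andbT.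
apply: ereal_inf_lbound; exists (fun=> 0), (fun=> 0); split => //.
rewrite eseries0 // => k _ _; congr _%:E.
by rewrite /vol (bigD1 (Ordinal d_gt0)) //= !mxE subrr maxxx mul0r.
Qed.

Lemma nneseries_le (u : nat -> \bar R) (x : \bar R) :
  (forall n, (0 <= u n)%E) -> (forall n, (\sum_(0 <= i < n) u i <= x)%E) ->
  (\sum_(0 <= i <oo) u i <= x)%E.
Proof.
move=> u_ge0 ub.
have u_nd := ereal_nondecreasing_series (P := xpredT) (N := 0%N) (fun n _ _ => u_ge0 n).
rewrite (cvg_lim _ (ereal_nondecreasing_cvgn u_nd)) //.
by apply: ge_ereal_sup => _ [n _ <-].
Qed.

Lemma sum_interleave (f g : nat -> \bar R) n :
  (\sum_(0 <= i < n.*2) (if odd i then g i./2 else f i./2) =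
   \sum_(0 <= i < n) f i + \sum_(0 <= i < n) g i)%E.
Proof.
elim: n => [|n IHn]; first by rewrite !big_mkord !big_ord0 adde0.
rewrite doubleS !big_nat_recr //= IHn odd_double /= uphalf_double doubleK.
by rewrite -!addeA; congr (_ + _)%E; rewrite addeCA.
Qed.

(* Interleave two covers of total volume [< e/2] each. *)
Lemma leb_nullU (A B : set V) : leb_null A -> leb_null B -> leb_null (A `|` B).
Proof.
move=> A0 B0; apply/leb_nullE => e e_gt0.
have e2_gt0 : 0 < e / 2 by rewrite divr_gt0.
have /ereal_inf_lt[_ [aA [bA [Acov ->]]] ltA] :
    (lebesgue_outer A < (e / 2)%:E)%E by rewrite A0 lte_fin.
have /ereal_inf_lt[_ [aB [bB [Bcov ->]]] ltB] :
    (lebesgue_outer B < (e / 2)%:E)%E by rewrite B0 lte_fin.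
pose a k := if odd k then aB k./2 else aA k./2.
pose b k := if odd k then bB k./2 else bA k./2.
have vol_ab k : vol (a k) (b k) =
    if odd k then vol (aB k./2) (bB k./2) else vol (aA k./2) (bA k./2).
  by rewrite /a /b; case: odd.
apply: ge_ereal_inf; exists (\sum_(0 <= k <oo) (vol (a k) (b k))%:E)%E.
  exists a, b; split => // x [/Acov [k _ xk]|/Bcov [k _ xk]].
    by exists k.*2 => //; rewrite /a /b odd_double doubleK.
  by exists k.*2.+1 => //; rewrite /a /b /= odd_double /= uphalf_double.
apply: nneseries_le => [k|n]; first by rewrite lee_fin vol_ge0.
apply: (@le_trans _ _ (\sum_(0 <= k < n.*2) (vol (a k) (b k))%:E)%E).
  apply: (ereal_nondecreasing_series (P := xpredT) (N := 0%N)
    (u_ := fun k => (vol (a k) (b k))%:E)); first by move=> k _ _; rewrite lee_fin vol_ge0.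
  by rewrite -addnn leq_addr.
under eq_bigr do rewrite vol_ab fun_if.
rewrite (sum_interleave (fun k => (vol (aA k) (bA k))%:E)
                       (fun k => (vol (aB k) (bB k))%:E)) (splitr e) EFinD.
by apply: leeD; [apply/ltW/(le_lt_trans _ ltA)|apply/ltW/(le_lt_trans _ ltB)];
  apply: nneseries_lim_ge => k _ _; rewrite lee_fin vol_ge0.
Qed.

Lemma leb_null_bigcup (T : eqType) (s : seq T) (N : T -> set V) : (0 < d)%N ->
  (forall t, t \in s -> leb_null (N t)) ->
  leb_null [set x | exists2 t, t \in s & N t x].
Proof.
move=> d_gt0; elim: s => [|t s IHs] sN.
  by apply: leb_null_sub (leb_null0 d_gt0) => x [].
apply: (@leb_null_sub _ (N t `|` [set x | exists2 u, u \in s & N u x])).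
  move=> x [u]; rewrite in_cons => /orP[/eqP -> | us] Nux; [by left | right].
  by exists u.
apply: leb_nullU; first by apply: sN; rewrite mem_head.
by apply: IHs => u us; apply: sN; rewrite in_cons us orbT.
Qed.

Lemma ae_in_all (D : set V) (P : V -> Prop) :
  (0 < d)%N -> (forall x, D x -> P x) -> ae_in D P.
Proof.
move=> d_gt0 DP; apply: leb_null_sub (leb_null0 d_gt0).
by move=> x [/DP].
Qed.

Lemma not_ae_in (D : set V) (P : V -> Prop) :
  (0 < d)%N -> ~ ae_in D P -> exists2 x, D x & ~ P x.
Proof.
move=> d_gt0 notDP; apply: contrapT => noX; apply/notDP/ae_in_all => // x Dx.
by apply: contrapT => notPx; apply: noX; exists x.
Qed.
End NullSets.

Section Euclid.
Variables (R : realType) (d : nat).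
Notation V := 'rV[R]_d.

Lemma eucl0 : eucl (0 : V) = 0.
Proof. by rewrite /eucl big1 ?sqrtr0 // => i _; rewrite mxE expr0n. Qed.

Lemma euclB (x y : V) : eucl (x - y) = eucl (y - x).
Proof.
rewrite /eucl; congr Num.sqrt; apply: eq_bigr => i _.
by rewrite !mxE -sqrrN opprB.
Qed.

Lemma norm_coord_le_eucl (v : V) i : `|v ord0 i| <= eucl v.
Proof.
rewrite -sqrtr_sqr ler_sqrt; last by apply: sumr_ge0 => j _; apply: sqr_ge0.
by rewrite (bigD1 i) //= lerDl; apply: sumr_ge0 => j _; apply: sqr_ge0.
Qed.

Lemma eucl_le_coord (v : V) (c : R) :
  0 <= c -> (forall i, `|v ord0 i| <= c) -> eucl v <= d%:R * c.
Proof.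
move=> c_ge0 vc; rewrite -[d%:R * c]ger0_norm ?mulr_ge0 // -sqrtr_sqr ler_sqrt ?sqr_ge0 //.
apply: (@le_trans _ _ (\sum_(i < d) c ^+ 2)).
  apply: ler_sum => i _; rewrite -real_normK ?num_real //.
  by rewrite lerXn2r ?nnegrE ?vc.
rewrite sumr_const card_ord exprMn mulrC -[c ^+ 2 *+ d]mulr_natr ler_wpM2l ?sqr_ge0 //.
by rewrite -natrX ler_nat; case: (d) => // n; rewrite expnS leq_pmulr.
Qed.

(* Via the maximum norm, at the cost of the factor [d]. *)
Lemma eucl_triangle_dim (x y z : V) :
  eucl (x - z) <= d%:R * (eucl (x - y) + eucl (y - z)).
Proof.
apply: eucl_le_coord => [|i]; first by rewrite addr_ge0 ?sqrtr_ge0.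
have -> : (x - z) ord0 i = (x - y) ord0 i + (y - z) ord0 i by rewrite !mxE subrKA.
by apply: le_trans (ler_normD _ _) _; rewrite lerD ?norm_coord_le_eucl.
Qed.

Lemma eucl_le_diam (A : set V) x y : A x -> A y -> ((eucl (x - y))%:E <= diam A)%E.
Proof. by move=> Ax Ay; apply: ereal_sup_ubound; exists x => //; exists y. Qed.

Lemma diam0 : diam (set0 : set V) = -oo%E.
Proof.
by apply/le_anti; rewrite leNye andbT; apply: ge_ereal_sup => _ [x []].
Qed.

Lemma supp_witness (D : set V) (f : V -> R) (r : R) :
  (r%:E <= diam (supp D f))%E -> exists2 x, D x & f x != 0.
Proof.
move=> r_le; apply: contrapT => no_x.
suff supp0 : supp D f = set0 by move: r_le; rewrite supp0 diam0 leeNy_eq.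
rewrite /supp [X in closure X](_ : _ = set0) ?closure0 //.
by apply/seteqP; split => // x [Dx fx]; apply: no_x; exists x.
Qed.
End Euclid.

Lemma has_notin_iota (S : seq nat) (Q : nat) :
  (size S < Q)%N -> has (fun c => c \notin S) (iota 0 Q).
Proof.
move=> SQ; apply/negPn/negP; rewrite -all_predC => /allP allS.
have /(uniq_leq_size (iota_uniq 0 Q)) : {subset iota 0 Q <= S}.
  by move=> c /allS /=; rewrite negbK.
by rewrite size_iota leqNgt SQ.
Qed.

Section GreedyColoring.
Variables (adj : nat -> nat -> Prop) (Q : nat).

Definition color_ok (n : nat) (cols : seq nat) (c : nat) : bool :=
  `[< forall m, (m < n)%N -> adj m n -> nth 0%N cols m != c >].

Definition fresh_color (n : nat) (cols : seq nat) : nat :=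
  find (color_ok n cols) (iota 0 Q).

Fixpoint greedy_prefix (n : nat) : seq nat :=
  if n is n'.+1 then rcons (greedy_prefix n') (fresh_color n' (greedy_prefix n'))
  else [::].

Definition greedy_color (n : nat) : nat := fresh_color n (greedy_prefix n).

Lemma size_greedy_prefix n : size (greedy_prefix n) = n.
Proof. by elim: n => //= n IHn; rewrite size_rcons IHn. Qed.

Lemma nth_greedy_prefix n m : (m < n)%N -> nth 0%N (greedy_prefix n) m = greedy_color m.
Proof.
elim: n => // n IHn; rewrite ltnS leq_eqVlt => /orP[/eqP -> | mn] /=.
  by rewrite nth_rcons size_greedy_prefix ltnn eqxx.
by rewrite nth_rcons size_greedy_prefix mn IHn.
Qed.

Lemma greedy_colorP n (U : seq nat) : (size U < Q)%N ->
    (forall m, (m < n)%N -> adj m n -> m \in U) ->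
  (greedy_color n < Q)%N /\
  forall m, (m < n)%N -> adj m n -> greedy_color m != greedy_color n.
Proof.
move=> UQ nU; pose ok := color_ok n (greedy_prefix n).
have okQ : has ok (iota 0 Q).
  have /hasP[c cQ cU] : has (fun c => c \notin map greedy_color U) (iota 0 Q).
    by apply: has_notin_iota; rewrite size_map.
  apply/hasP; exists c => //; apply/asboolP => m mn mn_adj; rewrite nth_greedy_prefix //.
  by apply: contraNneq cU => <-; apply/map_f/nU.
have := has_find ok (iota 0 Q); rewrite okQ size_iota => colQ.
have /asboolP colP := nth_find 0%N okQ; rewrite nth_iota // add0n in colP.
split=> // m mn mn_adj; rewrite -(nth_greedy_prefix mn); exact: colP.
Qed.
End GreedyColoring.

Lemma countable_coloring (T : countType) (adj : T -> T -> Prop) (Q : nat) :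
    (forall t u, adj t u -> adj u t) ->
    (forall t, exists2 s : seq T, (size s < Q)%N & forall u, adj u t -> u \in s) ->
  exists col : T -> nat,
    (forall t, col t < Q)%N /\ forall t u, t <> u -> adj t u -> col t <> col u.
Proof.
move=> adj_sym adj_fin.
pose adjN m n := exists t u, [/\ pickle t = m, pickle u = n & adj t u].
have pickle_inj : injective (@pickle T) := pcan_inj pickleK.
have colP (t : T) : (greedy_color adjN Q (pickle t) < Q)%N /\
    forall m, (m < pickle t)%N -> adjN m (pickle t) ->
      greedy_color adjN Q m != greedy_color adjN Q (pickle t).
  have [s sQ adj_s] := adj_fin t.
  apply: (greedy_colorP (U := map pickle s)); first by rewrite size_map.
  by move=> _ _ [u [t' [<- /pickle_inj -> ut]]]; apply/map_f/adj_s.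
exists (fun t => greedy_color adjN Q (pickle t)).
split=> [t | t u tu tu_adj]; first exact: (colP t).1.
have pickle_neq : pickle t != pickle u by apply/eqP => /pickle_inj.
apply/eqP; case: ltngtP pickle_neq => // [tu_lt|ut_lt] _.
  by apply: (colP u).2 => //; exists t, u.
by rewrite eq_sym; apply: (colP t).2 => //; exists u, t; split => //; apply: adj_sym.
Qed.

Section RealBounds.
Variable R : realType.

Lemma powR2_scaleX (c : R) (n k : nat) :
  2 `^ (n%:R * k%:R) * (c * 2 `^ (- k%:R)) ^+ n = c ^+ n.
Proof.
rewrite exprMn mulrCA -[(2 `^ _) ^+ n]powR_mulrn ?powR_ge0 // -powRrM -powRD; last first.
  by apply/implyP => _; rewrite pnatr_eq0.
by rewrite mulNr [k%:R * _]mulrC addrN powRr0 mulr1.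
Qed.

Lemma max1_mul_le (t a : R) : 1 <= t -> Num.max 1 (t * a) <= t * Num.max 1 a.
Proof.
move=> t_ge1; have t_ge0 : 0 <= t := le_trans ler01 t_ge1.
rewrite ge_max; apply/andP; split.
  by apply: le_trans t_ge1 _; rewrite ler_peMr // le_max lexx.
by rewrite ler_wpM2l // le_max lexx orbT.
Qed.

Lemma powR2_divn_le (a : R) (Q l : nat) : 0 <= a -> (0 < Q)%N ->
  2 `^ (a * (l %/ Q)%:R) <= 2 `^ (a / Q%:R * l%:R).
Proof.
move=> a_ge0 Q_gt0; rewrite ler_powR ?ler1n // mulrAC ler_pdivlMr ?ltr0n //.
by rewrite -mulrA ler_wpM2l // -natrM ler_nat leq_divM.
Qed.

(* [l / Q <= l %/ Q + 1] costs the constant factor [2 `^ a]. *)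
Lemma powR2_divn_decay (a : R) (Q l : nat) : 0 <= a -> (0 < Q)%N ->
  2 `^ (- a * (l %/ Q)%:R) <= 2 `^ a * 2 `^ (- (a / Q%:R) * l%:R).
Proof.
move=> a_ge0 Q_gt0; rewrite -powRD; last by apply/implyP => _; rewrite pnatr_eq0.
rewrite ler_powR ?ler1n // !mulNr -mulrA [_^-1 * _]mulrC -/(l%:R / Q%:R).
have : l%:R / Q%:R <= (l %/ Q)%:R + 1 :> R.
  by rewrite ler_pdivrMr ?ltr0n // natr1 -natrM ler_nat ltnW // ltn_ceil.
nra.
Qed.

Lemma powR2_Nnat_le (k k' : nat) : (k <= k')%N -> 2 `^ (- k'%:R) <= 2 `^ (- k%:R) :> R.
Proof. by move=> kk'; rewrite ler_powR ?ler1n // lerN2 ler_nat. Qed.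
End RealBounds.

Lemma at_most_le (R : realType) (T : eqType) (A B : set T) (b c : R) :
  at_most B b -> A `<=` B -> b <= c -> at_most A c.
Proof.
by move=> [s [sb Bs]] AB bc; exists s; split; [apply: le_trans bc | apply: subset_trans Bs].
Qed.

Lemma esum_le_single (R : realType) (T : choiceType) (A : set T) (f : T -> \bar R)
    (c : \bar R) :
    (forall t, A t -> 0 <= f t)%E ->
    (forall t u, A t -> A u -> f t != 0%E -> f u != 0%E -> t = u) ->
    (forall t, A t -> f t <= c)%E -> (0 <= c)%E ->
  (\esum_(t in A) f t <= c)%E.
Proof.
move=> f_ge0 f_single f_le c_ge0.
have [[t [At ft_neq0]]|f_eq0] := pselect (exists t, A t /\ f t != 0%E); last first.
  rewrite esum1 // => t At; apply/eqP; apply: contrapT => ft_neq0.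
  by apply: f_eq0; exists t; split => //; apply/negP.
rewrite (esumID [set t]) // [X in (_ + X)%E]esum1 ?adde0; last first.
  move=> u [Au /= u_neq_t]; apply/eqP/negPn/negP => fu_neq0.
  exact/u_neq_t/f_single.
have -> : A `&` [set t] = [set t] by apply/seteqP; split=> [u [] | u ->].
by rewrite esum_set1 ?f_ge0 ?f_le.
Qed.

Lemma bounded_dom_ball (R : realType) (d : nat) (D : set 'rV[R]_d) :
  bounded_dom D -> exists2 rho : R, 0 < rho & D `<=` eball 0 rho.
Proof.
move=> [b Db]; exists (`|b| + 1); first by rewrite ltr_pwDr ?normr_ge0.
move=> x /Db xb; rewrite /eball /= subr0.
by apply: le_lt_trans xb _; rewrite ltr_pwDr // ler_norm.
Qed.

Section Refinement.
Variables (R : realType) (d : nat) (D : set 'rV[R]_d) (M : countType).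
Variables (lev : M -> nat) (theta : M -> 'rV[R]_d -> R) (ca2 cb cc alpha rho : R).
Hypotheses (d_gt0 : (0 < d)%N) (ca2_gt0 : 0 < ca2) (cb_gt0 : 0 < cb).
Hypotheses (cc_gt0 : 0 < cc) (alpha_gt0 : 0 < alpha).

Let S mu := supp D (theta mu).
Let rad (k : nat) := ca2 * 2 `^ (- k%:R).

Hypothesis theta_neq0 : forall mu, exists2 x, D x & theta mu x != 0.
Hypothesis diam_supp : forall mu, (diam (S mu) <= (rad (lev mu))%:E)%E.
Hypothesis count_supp : forall (x : 'rV[R]_d) (r : R) (l : nat), 0 < r ->
  at_most [set mu | lev mu = l /\ S mu `&` eball x r !=set0]
          (cb * Num.max 1 (2 `^ (d%:R * l%:R) * r ^+ d)).
Hypothesis theta_bound :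
  forall mu, ae_in D (fun x => `|theta mu x| <= cc * 2 `^ (- alpha * (lev mu)%:R)).
Hypotheses (rho_gt0 : 0 < rho) (D_ball : D `<=` eball 0 rho).

Lemma rad_gt0 k : 0 < rad k.
Proof. by rewrite mulr_gt0 ?powR_gt0. Qed.

Lemma eucl_supp_le x y mu : S mu x -> S mu y -> eucl (x - y) <= rad (lev mu).
Proof.
by move=> Sx Sy; rewrite -lee_fin; apply: le_trans (diam_supp mu); apply: eucl_le_diam.
Qed.

Definition supp_close (mu' mu : M) : Prop := lev mu' = lev mu /\
  exists x y, [/\ S mu' x, S mu y & eucl (x - y) <= rad (lev mu)].

Lemma supp_close_sym mu mu' : supp_close mu mu' -> supp_close mu' mu.
Proof.
by move=> [lev_eq [x [y [Sx Sy xy]]]]; split=> //; exists y, x; rewrite euclB lev_eq.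
Qed.

Lemma supp_close_ball mu' mu x0 : S mu x0 -> supp_close mu' mu ->
  S mu' `&` eball x0 (3 * d%:R * rad (lev mu)) !=set0.
Proof.
move=> Sx0 [_ [x [y [Sx Sy xy]]]]; exists x; split=> //.
apply: le_lt_trans (eucl_triangle_dim x y x0) _.
have := eucl_supp_le Sy Sx0; have := rad_gt0 (lev mu).
have : 0 < d%:R :> R by rewrite ltr0n.
nra.
Qed.

Lemma at_most_supp_close mu :
  at_most [set mu' | supp_close mu' mu] (cb * Num.max 1 ((3 * d%:R * ca2) ^+ d)).
Proof.
have [x0 Dx0 theta_x0] := theta_neq0 mu.
have r_gt0 : 0 < 3 * d%:R * rad (lev mu) by rewrite !mulr_gt0 ?ltr0n ?rad_gt0.
apply: (at_most_le (count_supp x0 (lev mu) r_gt0)).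
  move=> mu' close; split; first by case: close.
  by apply: supp_close_ball close; apply: subset_closure.
by rewrite mulrA powR2_scaleX.
Qed.

Lemma separated_coloring (Q : nat) : cb * Num.max 1 ((3 * d%:R * ca2) ^+ d) < Q%:R ->
  exists col : M -> nat, (forall mu, col mu < Q)%N /\
    forall mu mu', mu <> mu' -> lev mu = lev mu' -> col mu = col mu' ->
    forall x y, S mu x -> S mu' y -> rad (lev mu) < eucl (x - y).
Proof.
move=> KQ; have [|col [colQ col_proper]] := countable_coloring (Q := Q) supp_close_sym.
  move=> mu; have [s [s_le close_s]] := at_most_supp_close mu.
  by exists s => [|mu' /close_s]; rewrite // -(ltr_nat R) (le_lt_trans s_le).
exists col; split=> // mu mu' neq lev_eq col_eq x y Sx Sy.
rewrite ltNge; apply/negP => xy.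
by apply: (col_proper _ _ neq _ col_eq); split=> //; exists x, y; rewrite -lev_eq.
Qed.

Lemma at_most_lev k :
  at_most [set mu | lev mu = k] (cb * Num.max 1 (2 `^ (d%:R * k%:R) * rho ^+ d)).
Proof.
apply: (at_most_le (count_supp 0 k rho_gt0)) => // mu lev_mu; split=> //.
have [x Dx theta_x] := theta_neq0 mu.
by exists x; split; [apply: subset_closure | apply: D_ball].
Qed.

Section RefinedLevel.
Variables (Q : nat) (col : M -> nat).
Hypotheses (Q_gt0 : (0 < Q)%N) (col_lt : forall mu, (col mu < Q)%N).
Hypothesis col_sep : forall mu mu', mu <> mu' -> lev mu = lev mu' -> col mu = col mu' ->
  forall x y, S mu x -> S mu' y -> rad (lev mu) < eucl (x - y).

Definition refined_lev (mu : M) : nat := (Q * lev mu + col mu)%N.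

Lemma refined_levK mu : (refined_lev mu %/ Q)%N = lev mu.
Proof. by rewrite /refined_lev mulnC divnMDl // divn_small ?addn0. Qed.

Lemma refined_lev_inj mu mu' :
  refined_lev mu = refined_lev mu' -> lev mu = lev mu' /\ col mu = col mu'.
Proof.
move=> eq_rl; have lev_eq : lev mu = lev mu' by rewrite -refined_levK eq_rl refined_levK.
by split=> //; move: eq_rl; rewrite /refined_lev lev_eq => /addnI.
Qed.

Lemma supp_mul_neq0 mu mu' x : D x -> theta mu x * theta mu' x <> 0 -> S mu x /\ S mu' x.
Proof.
move=> Dx /eqP; rewrite mulf_eq0 negb_or => /andP[? ?].
by split; apply: subset_closure.
Qed.

Lemma refined_lev_mul_eq0 mu mu' : refined_lev mu = refined_lev mu' -> mu <> mu' ->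
  forall x, D x -> theta mu x * theta mu' x = 0.
Proof.
move=> /refined_lev_inj[lev_eq col_eq] neq x Dx.
apply: contrapT => /(supp_mul_neq0 Dx)[Sx S'x].
have := col_sep neq lev_eq col_eq Sx S'x.
by rewrite subrr eucl0 ltNge ltW ?rad_gt0.
Qed.

Lemma refined_lev_ortho mu mu' : refined_lev mu = refined_lev mu' -> mu <> mu' ->
  ae_in D (fun x => theta mu x * theta mu' x = 0).
Proof. by move=> eq_rl neq; apply: ae_in_all => //; apply: refined_lev_mul_eq0. Qed.

Lemma refined_lev_overlap_unique mu (l : nat) : (l < refined_lev mu)%N ->
  forall mu1 mu2, refined_lev mu1 = l -> refined_lev mu2 = l ->
  ~ ae_in D (fun x => theta mu x * theta mu1 x = 0) ->
  ~ ae_in D (fun x => theta mu x * theta mu2 x = 0) -> mu1 = mu2.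
Proof.
move=> l_lt mu1 mu2 rl1 rl2 /(not_ae_in d_gt0)[x Dx /(supp_mul_neq0 Dx)[Sx S1x]].
move=> /(not_ae_in d_gt0)[y Dy /(supp_mul_neq0 Dy)[Sy S2y]].
apply: contrapT => neq; have [lev_eq col_eq] := refined_lev_inj (etrans rl1 (esym rl2)).
have lev_le : (lev mu1 <= lev mu)%N by rewrite -!refined_levK leq_div2r // rl1 ltnW.
have := col_sep neq lev_eq col_eq S1x S2y; apply/negP; rewrite -leNgt.
apply: le_trans (eucl_supp_le Sx Sy) _.
by rewrite ler_pM2l // powR2_Nnat_le.
Qed.

Lemma at_most_refined_lev l : at_most [set mu | refined_lev mu = l]
  (cb * Num.max 1 (rho ^+ d) * 2 `^ (d%:R / Q%:R * l%:R)).
Proof.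
apply: (at_most_le (at_most_lev (l %/ Q))); first by move=> mu <-; rewrite /= refined_levK.
rewrite -mulrA; apply: ler_wpM2l; first exact: ltW.
apply: (le_trans (max1_mul_le _ _)).
  by rewrite -[leLHS](powRr0 2) ler_powR ?ler1n ?mulr_ge0.
by rewrite mulrC; apply: ler_wpM2l; rewrite ?powR2_divn_le // le_max ler01.
Qed.

Lemma refined_lev_sum_le l : ae_in D (fun x =>
  (\esum_(mu in [set mu | refined_lev mu = l]) (`|theta mu x|)%:E
     <= (cc * 2 `^ alpha * 2 `^ (- (alpha / Q%:R) * l%:R))%:E)%E).
Proof.
have [s [_ lev_s]] := at_most_lev (l %/ Q).
apply: leb_null_sub (leb_null_bigcup d_gt0 (fun mu _ => theta_bound mu)) => x [Dx].
apply: contra_notP => theta_x_le.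
have theta_x_lev mu : refined_lev mu = l ->
    `|theta mu x| <= cc * 2 `^ (- alpha * (l %/ Q)%:R).
  move=> rl; have lev_mu : lev mu = (l %/ Q)%N by rewrite -rl refined_levK.
  apply: contrapT => ?; apply: theta_x_le; exists mu; first exact: lev_s.
  by split=> //; rewrite lev_mu.
apply: esum_le_single => [mu _ | mu mu' /= rl rl' | mu /= rl |].
- by rewrite lee_fin normr_ge0.
- rewrite !eqe !normr_eq0 => nz nz'; apply: contrapT => neq.
  have /eqP := refined_lev_mul_eq0 (etrans rl (esym rl')) neq Dx.
  by rewrite mulf_eq0 (negPf nz) (negPf nz').
- rewrite lee_fin; apply: le_trans (theta_x_lev mu rl) _.
  by rewrite -mulrA; apply: ler_wpM2l; [exact: ltW | apply: powR2_divn_decay; rewrite ?ltW].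
- by rewrite lee_fin !mulr_ge0 ?powR_ge0 ?ltW.
Qed.
End RefinedLevel.
End Refinement.

Theorem lemma3p4 (R : realType) (d : nat) (d_gt0 : (0 < d)%N)
  (ca1 ca2 cb cc alpha : R)
  (ca1_gt0 : 0 < ca1) (ca2_gt0 : 0 < ca2) (cb_gt0 : 0 < cb) (cc_gt0 : 0 < cc)
  (alpha_gt0 : 0 < alpha) :
  exists Q : nat, (0 < Q)%N /\
  forall (D : set 'rV[R]_d) (M : countType) (lev : M -> nat)
         (theta : M -> 'rV[R]_d -> R),
    domain D -> bounded_dom D ->
    (forall mu, in_Linfty D (theta mu)) ->
    (* (a) *)
    (forall mu, (ca1 * 2 `^ (- (lev mu)%:R))%:E <= diam (supp D (theta mu)) /\
                diam (supp D (theta mu)) <= (ca2 * 2 `^ (- (lev mu)%:R))%:E)%E ->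
    (* (b) *)
    (forall (x : 'rV[R]_d) (r : R) (l : nat), 0 < r ->
       at_most [set mu | lev mu = l /\ supp D (theta mu) `&` eball x r !=set0]
               (cb * Num.max 1 (2 `^ (d%:R * l%:R) * r ^+ d))) ->
    (* (c) *)
    (forall mu, ae_in D (fun x => `|theta mu x| <= cc * 2 `^ (- alpha * (lev mu)%:R))) ->
    exists (levQ : M -> nat) (C3 C4 : R),
      (* (i) *)
      (forall mu mu', levQ mu = levQ mu' -> mu <> mu' ->
         ae_in D (fun x => theta mu x * theta mu' x = 0)) /\
      (* (ii) *)
      (forall mu (l : nat), (l < levQ mu)%N ->
         forall mu1 mu2, levQ mu1 = l -> levQ mu2 = l ->
           ~ ae_in D (fun x => theta mu x * theta mu1 x = 0) ->
           ~ ae_in D (fun x => theta mu x * theta mu2 x = 0) ->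
           mu1 = mu2) /\
      (* (iii) *)
      (forall l : nat,
         at_most [set mu | levQ mu = l] (C3 * 2 `^ (d%:R / Q%:R * l%:R))) /\
      (* (iv) *)
      (forall l : nat,
         ae_in D (fun x => (\esum_(mu in [set mu | levQ mu = l]) (`|theta mu x|)%:E
                             <= (C4 * 2 `^ (- (alpha / Q%:R) * l%:R))%:E)%E)).
Proof.
pose K := cb * Num.max 1 ((3 * d%:R * ca2) ^+ d); pose Q := (Num.truncn K).+1.
have Q_gt0 : (0 < Q)%N by [].
exists Q; split=> // D M lev theta _ /bounded_dom_ball[rho rho_gt0 D_ball] _.
move=> diam_supp count_supp theta_bound.
have theta_neq0 mu : exists2 x, D x & theta mu x != 0 := supp_witness (diam_supp mu).1.
have diam_le mu := (diam_supp mu).2.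
have [col [col_lt col_sep]] := separated_coloring d_gt0 ca2_gt0 theta_neq0 diam_le
  count_supp (truncnS_gt K).
exists (refined_lev lev Q col), (cb * Num.max 1 (rho ^+ d)), (cc * 2 `^ alpha).
split; [|split; [|split]].
- exact (refined_lev_ortho d_gt0 ca2_gt0 Q_gt0 col_lt col_sep).
- exact (refined_lev_overlap_unique d_gt0 ca2_gt0 diam_le Q_gt0 col_lt col_sep).
- exact (at_most_refined_lev cb_gt0 theta_neq0 count_supp rho_gt0 D_ball Q_gt0 col_lt).
- exact (refined_lev_sum_le d_gt0 ca2_gt0 cc_gt0 alpha_gt0 theta_neq0 count_supp
    theta_bound rho_gt0 D_ball Q_gt0 col_lt col_sep).
Qed.
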